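(* Let $\Lambda$ be a left cancellative small category and $v\in\Lambda^0$. Then (a) every maximal filter in $\mathcal D^{(0)}_v$ belongs to $v\Lambda^*$; (b) every totally ordered (by inclusion) subset of $v\Lambda^*$ has an upper bound in $v\Lambda^*$ (so Zorn's lemma applies to $v\Lambda^*$); and (c) every maximal element of $v\Lambda^*$ (with respect to inclusion) is a maximal filter in $\mathcal D^{(0)}_v$.
   Context: A left cancellative small category (LCSC) is a small category $\Lambda$ such that $\alpha\beta=\alpha\gamma$ implies $\beta=\gamma$. Composition $\alpha\beta$ is defined when $s(\alpha)=r(\beta)$; $\Lambda^0$ is the set of objects; $v\Lambda=\{\alpha:r(\alpha)=v\}$. For $\alpha\in\Lambda$, $\tau^\alpha(\beta)=\alpha\beta$ on $s(\alpha)\Lambda$ and $\sigma^\alpha:\alpha\Lambda\to s(\alpha)\Lambda$ is its inverse. A zigzag is a tuple $\zeta=(\alpha_1,\beta_1,\dots,\alpha_n,\beta_n)$ with $r(\alpha_i)=r(\beta_i)$ and $s(\alpha_{i+1})=s(\beta_i)$, $s(\zeta)=s(\beta_n)$; the zigzag map $\varphi_\zeta=\sigma^{\alpha_1}\circ\tau^{\beta_1}\circ\cdots\circ\sigma^{\alpha_n}\circ\tau^{\beta_n}$ (partial map) has domain $A(\zeta)\subseteq s(\zeta)\Lambda$. $\mathcal D^{(0)}_v$ is the set of nonempty $A(\zeta)$ with $s(\zeta)=v$ (closed under nonempty intersection). A filter in $\mathcal D^{(0)}_v$ is a nonempty $C\subseteq\mathcal D^{(0)}_v$ closed under intersection and under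 supersets within $\mathcal D^{(0)}_v$ (so its members are nonempty). A finite $\mathcal F\subseteq\mathcal D^{(0)}_v$ covers the filter $C$ if some $E\in C$ satisfies $E\subseteq\bigcup\mathcal F$. $v\Lambda^*$ is the set of filters $C$ in $\mathcal D^{(0)}_v$ such that every finite $\mathcal F\subseteq\mathcal D^{(0)}_v$ with $\mathcal F\cap C=\varnothing$ does not cover $C$. *)

From Stdlib Require Import List.
Import ListNotations.

(* A small category; composition is a total function on morphisms whose
   value is only meaningful (and only constrained) on composable pairs,
   i.e. when [src a = rng b].  [comp a b] is "a b" (a after b). *)
Record Cat := {
  Obj : Type;
  Mor : Type;
  rng : Mor -> Obj;
  src : Mor -> Obj;
  comp : Mor -> Mor -> Mor;
  idm : Obj -> Mor;
  rng_idm : forall v, rng (idm v) = v;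
  src_idm : forall v, src (idm v) = v;
  rng_comp : forall a b, src a = rng b -> rng (comp a b) = rng a;
  src_comp : forall a b, src a = rng b -> src (comp a b) = src b;
  comp_assoc : forall a b c, src a = rng b -> src b = rng c ->
      comp (comp a b) c = comp a (comp b c);
  comp_idl : forall a, comp (idm (rng a)) a = a;
  comp_idr : forall a, comp a (idm (src a)) = a
}.

Arguments rng {c0} _.
Arguments src {c0} _.
Arguments comp {c0} _ _.
Arguments idm {c0} _.

Definition left_cancellative (L : Cat) : Prop :=
  forall a b c : Mor L, src a = rng b -> src a = rng c ->
    comp a b = comp a c -> b = c.

(* Graph of the partial map sigma^a o tau^b:
   x in s(b)Lambda  |->  the z in s(a)Lambda with a z = b x. *)
Definition pair_rel {L : Cat} (a b : Mor L) (x z : Mor L) : Prop :=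
  rng x = src b /\ rng z = src a /\ comp a z = comp b x.

(* Graph of the zigzag map of zeta = [(a1,b1); ...; (an,bn)]:
   phi = sigma^{a1} o tau^{b1} o ... o sigma^{an} o tau^{bn}. *)
Fixpoint zz_rel {L : Cat} (l : list (Mor L * Mor L)) : Mor L -> Mor L -> Prop :=
  match l with
  | [] => fun x y => x = y
  | (a, b) :: l' => fun x y => exists z, zz_rel l' x z /\ pair_rel a b z y
  end.

Fixpoint is_zigzag_from {L : Cat} (l : list (Mor L * Mor L)) (v : Obj L) : Prop :=
  match l with
  | [] => False
  | [(a, b)] => rng a = rng b /\ src b = v
  | (a, b) :: (((a', b') :: _) as l') =>
      rng a = rng b /\ src a' = src b /\ is_zigzag_from l' v
  end.

Definition zz_dom {L : Cat} (l : list (Mor L * Mor L)) : Mor L -> Prop :=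
  fun x => exists y, zz_rel l x y.

Definition set_incl {X : Type} (E F : X -> Prop) : Prop := forall x, E x -> F x.

Definition D0 {L : Cat} (v : Obj L) (E : Mor L -> Prop) : Prop :=
  (exists l, is_zigzag_from l v /\ forall x, E x <-> zz_dom l x) /\
  (exists x, E x).

Definition is_filter {L : Cat} (v : Obj L) (C : (Mor L -> Prop) -> Prop) : Prop :=
  (exists E, C E) /\
  (forall E, C E -> D0 v E) /\
  (forall E F, C E -> C F -> C (fun x => E x /\ F x)) /\
  (forall E F, C E -> D0 v F -> set_incl E F -> C F).

Definition fam_incl {L : Cat} (C C' : (Mor L -> Prop) -> Prop) : Prop :=
  forall E, C E -> C' E.

Definition maximal_filter {L : Cat} (v : Obj L) (C : (Mor L -> Prop) -> Prop) : Prop :=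
  is_filter v C /\
  forall C', is_filter v C' -> fam_incl C C' -> fam_incl C' C.

Definition covers {L : Cat} (F : list (Mor L -> Prop)) (C : (Mor L -> Prop) -> Prop) : Prop :=
  exists E, C E /\ forall x, E x -> exists G, In G F /\ G x.

Definition in_star {L : Cat} (v : Obj L) (C : (Mor L -> Prop) -> Prop) : Prop :=
  is_filter v C /\
  forall F : list (Mor L -> Prop),
    (forall G, In G F -> D0 v G) ->
    (forall G, In G F -> ~ C G) ->
    ~ covers F C.

Definition maximal_in_star {L : Cat} (v : Obj L) (C : (Mor L -> Prop) -> Prop) : Prop :=
  in_star v C /\
  forall C', in_star v C' -> fam_incl C C' -> fam_incl C' C.

(** Domains of zigzag maps are closed under nonempty intersection: since left
    cancellation makes every zigzag map injective, the intersection of A(ζ) and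
    A(ζ') is the domain of ζ' followed by the reversal of ζ followed by ζ.
    (a) If a maximal filter C missed some G ∈ D^(0)_v for which every member of C
    meets G, then C together with G would generate a strictly larger filter;
    hence each G ∉ C is disjoint from some member of C, and finitely many such
    members of C intersect to a member of C avoiding the whole cover.
    (b) The union of a nonempty chain in vΛ^* is again in vΛ^*, and the empty
    chain is bounded by the filter of all sets containing the identity at v.
    (c) By Zorn's lemma every filter lies in a maximal filter, which is in vΛ^*
    by (a); a maximal element of vΛ^* therefore equals it. *)

From Stdlib Require Import List Classical.
From mathcomp Require ssrbool boolp classical_sets.

Section Zigzags.

Variable L : Cat.
Hypothesis HL : left_cancellative L.

Implicit Types (l p q : list (Mor L * Mor L)) (u w : Obj L) (x y z : Mor L).

(* [zigzag_between l u w]: a possibly empty zigzag whose map goes from wΛ to uΛ. *)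
Fixpoint zigzag_between l u w : Prop :=
  match l with
  | nil => u = w
  | (a, b) :: l' => rng a = rng b /\ src a = u /\ zigzag_between l' (src b) w
  end.

Fixpoint zz_rev l : list (Mor L * Mor L) :=
  match l with
  | nil => nil
  | (a, b) :: l' => zz_rev l' ++ (b, a) :: nil
  end.

Lemma zigzag_between_cat p q u t w :
  zigzag_between p u t -> zigzag_between q t w -> zigzag_between (p ++ q) u w.
Proof.
  revert u; induction p as [|[a b] p IH]; simpl; intros u Hp Hq.
  - now subst.
  - destruct Hp as [? [? ?]]; eauto.
Qed.

Lemma zigzag_between_rev l u w : zigzag_between l u w -> zigzag_between (zz_rev l) w u.
Proof.
  revert u; induction l as [|[a b] l IH]; simpl; intros u Hl.
  - easy.
  - destruct Hl as [? [? ?]].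
    apply zigzag_between_cat with (src b); simpl; auto.
Qed.

Lemma is_zigzag_from_between l v :
  is_zigzag_from l v -> exists u, zigzag_between l u v.
Proof.
  induction l as [|[a b] [|[a' b'] l] IH]; simpl; intros Hl.
  - contradiction.
  - destruct Hl; eauto.
  - destruct Hl as [Hab [Hsrc Hl']].
    destruct (IH Hl') as [u Hu]; simpl in Hu.
    exists (src a); simpl; intuition congruence.
Qed.

Lemma zigzag_between_is_zigzag_from l u v :
  l <> nil -> zigzag_between l u v -> is_zigzag_from l v.
Proof.
  revert u; induction l as [|[a b] [|[a' b'] l] IH]; simpl; intros u Hnil Hl.
  - easy.
  - intuition.
  - destruct Hl as [Hab [_ [Ha' [Hsrc Hl']]]].
    repeat split; [easy | congruence |].
    apply (IH (src b)); [discriminate | simpl; auto].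
Qed.

Lemma zz_rel_cat p q x y :
  zz_rel (p ++ q) x y <-> exists z, zz_rel q x z /\ zz_rel p z y.
Proof.
  revert y; induction p as [|[a b] p IH]; simpl; intros y.
  - split; [eauto | now intros [z [? ->]]].
  - setoid_rewrite IH; firstorder.
Qed.

Lemma pair_rel_sym (a b : Mor L) x z : pair_rel a b x z -> pair_rel b a z x.
Proof. unfold pair_rel; intuition. Qed.

Lemma zz_rel_rev l x y : zz_rel (zz_rev l) y x <-> zz_rel l x y.
Proof.
  revert y; induction l as [|[a b] l IH]; simpl; intros y.
  - split; congruence.
  - rewrite zz_rel_cat; simpl; split.
    + intros [z [[z' [-> Hp]] Hl]].
      exists z; split; [apply IH | apply pair_rel_sym]; auto.
    + intros [z [Hl Hp]].
      exists z; split; [exists y; split; [easy | apply pair_rel_sym]; auto | apply IH; auto].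
Qed.

Lemma zz_rel_injective l x x' y : zz_rel l x y -> zz_rel l x' y -> x = x'.
Proof.
  revert y; induction l as [|[a b] l IH]; simpl; unfold pair_rel; intros y Hx Hx'.
  - congruence.
  - destruct Hx as [z [Hz [Hz1 [Hy1 Hzy]]]], Hx' as [z' [Hz' [Hz1' [_ Hzy']]]].
    assert (z = z') as <- by (apply (HL b); congruence).
    eauto.
Qed.

Lemma zz_dom_cat_rev l l' x :
  zz_dom (l' ++ zz_rev l ++ l) x <-> zz_dom l x /\ zz_dom l' x.
Proof.
  unfold zz_dom; setoid_rewrite zz_rel_cat; setoid_rewrite zz_rel_cat; split.
  - intros [y [w [[z [Hl Hrev]] Hl']]].
    rewrite zz_rel_rev in Hrev.
    assert (w = x) as -> by (symmetry; eapply zz_rel_injective; eauto).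
    eauto.
  - intros [[y Hl] [y' Hl']].
    exists y', x; split; [exists y; split; [| apply zz_rel_rev] |]; auto.
Qed.

Lemma D0_inter v (E F : Mor L -> Prop) :
  D0 v E -> D0 v F -> (exists x, E x /\ F x) -> D0 v (fun x => E x /\ F x).
Proof.
  intros [[l [Hl HE]] _] [[l' [Hl' HF]] _] Hne; split; [|easy].
  exists (l' ++ zz_rev l ++ l); split.
  - destruct (is_zigzag_from_between l v Hl) as [u Hu].
    destruct (is_zigzag_from_between l' v Hl') as [u' Hu'].
    apply (zigzag_between_is_zigzag_from _ u').
    + destruct l'; [contradiction | discriminate].
    + apply zigzag_between_cat with v; [easy |].
      apply zigzag_between_cat with u; [apply zigzag_between_rev |]; easy.
  - intros x; rewrite zz_dom_cat_rev, HE, HF; tauto.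
Qed.

End Zigzags.

Section Filters.

Variable L : Cat.
Hypothesis HL : left_cancellative L.
Variable v : Obj L.

Implicit Types (C M : (Mor L -> Prop) -> Prop) (E F G : Mor L -> Prop).

(* The filter generated by C together with G, when G meets every member of C. *)
Definition trace_filter C G : (Mor L -> Prop) -> Prop :=
  fun K => D0 v K /\ exists E, C E /\ set_incl (fun x => E x /\ G x) K.

Lemma trace_filter_is_filter C G :
  is_filter v C -> D0 v G -> (forall E, C E -> exists x, E x /\ G x) ->
  is_filter v (trace_filter C G).
Proof.
  intros [[E0 HE0] [_ [HI _]]] HG Hmeet; split; [|split; [|split]].
  - exists G; split; [easy |]. exists E0; split; [easy | intros x []; easy].
  - now intros K [].
  - intros K1 K2 [HK1 [E1 [HE1 H1]]] [HK2 [E2 [HE2 H2]]].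
    destruct (Hmeet _ (HI _ _ HE1 HE2)) as [x [[Ex1 Ex2] Gx]].
    split.
    + apply D0_inter; auto. exists x; split; [apply H1 | apply H2]; auto.
    + exists (fun x => E1 x /\ E2 x); split; [auto |].
      intros y [[? ?] ?]; split; [apply H1 | apply H2]; auto.
  - intros K K' [_ [E [HE H]]] HK' Hsub; split; [easy |].
    exists E; split; [easy | intros x Hx; apply Hsub, H, Hx].
Qed.

Lemma maximal_filter_separates C G :
  maximal_filter v C -> D0 v G -> ~ C G ->
  exists E, C E /\ forall x, E x -> ~ G x.
Proof.
  intros [HC Hmax] HG HnG; apply NNPP; intros Hno.
  assert (Hmeet : forall E, C E -> exists x, E x /\ G x).
  { intros E HE; apply NNPP; intros Hdisj.
    apply Hno; exists E; split; [easy |]; intros x Ex Gx; eauto. }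
  pose proof HC as [[E0 HE0] [HD _]].
  assert (HCtrace : fam_incl C (trace_filter C G)).
  { intros E HE; split; [auto |]. exists E; split; [easy | intros x []; easy]. }
  apply HnG, (Hmax _ (trace_filter_is_filter C G HC HG Hmeet) HCtrace).
  split; [easy |]. exists E0; split; [easy | intros x []; easy].
Qed.

Lemma maximal_filter_in_star C : maximal_filter v C -> in_star v C.
Proof.
  intros HM; split; [apply HM |].
  pose proof HM as [[_ [HD [HI _]]] _].
  induction F as [|G F IH]; intros HDF HnF [E [HE Hcov]].
  - destruct (HD E HE) as [_ [x Ex]].
    destruct (Hcov x Ex) as [G [[] _]].
  - destruct (maximal_filter_separates C G HM) as [EG [HEG HEGn]];
      [apply HDF; now left | apply HnF; now left |].
    apply IH; [intros; apply HDF; now right | intros; apply HnF; now right |].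
    exists (fun x => E x /\ EG x); split; [auto |].
    intros x [Ex EGx]; destruct (Hcov x Ex) as [G' [[<- | HG'] G'x]].
    + now destruct (HEGn x EGx).
    + eauto.
Qed.

Definition point_filter (x0 : Mor L) : (Mor L -> Prop) -> Prop :=
  fun E => D0 v E /\ E x0.

Lemma point_filter_in_star x0 : rng x0 = v -> in_star v (point_filter x0).
Proof.
  intros Hx0; split; [split; [|split; [|split]] |].
  - set (l := (idm v, idm v) :: nil).
    assert (Hdom : forall x, rng x = v -> zz_dom l x).
    { intros x Hx; exists x, x; unfold pair_rel; rewrite src_idm; split; [easy |].
      now rewrite Hx, <- Hx, comp_idl. }
    exists (zz_dom l); repeat split; eauto.
    exists l; split; [simpl; now rewrite rng_idm, src_idm | easy].
  - now intros E [].
  - intros E F [HE Ex0] [HF Fx0]; split; [apply D0_inter; eauto | easy].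
  - intros E F [_ Ex0] HF Hsub; split; auto.
  - intros F HDF HnF [E [[_ Ex0] Hcov]].
    destruct (Hcov x0 Ex0) as [G [HG Gx0]].
    apply (HnF G HG); split; auto.
Qed.

Definition is_chain (S : ((Mor L -> Prop) -> Prop) -> Prop) : Prop :=
  forall C1 C2, S C1 -> S C2 -> fam_incl C1 C2 \/ fam_incl C2 C1.

Definition chain_union (S : ((Mor L -> Prop) -> Prop) -> Prop) : (Mor L -> Prop) -> Prop :=
  fun E => exists C, S C /\ C E.

Lemma chain_union_is_filter S :
  (exists C, S C) -> (forall C, S C -> is_filter v C) -> is_chain S ->
  is_filter v (chain_union S).
Proof.
  intros [C0 HC0] HS Hchain; split; [|split; [|split]].
  - destruct (HS C0 HC0) as [[E HE] _]; exists E, C0; auto.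
  - intros E [C [HC HE]]; now apply (HS C HC).
  - intros E F [C1 [HC1 HE]] [C2 [HC2 HF]].
    destruct (Hchain C1 C2 HC1 HC2) as [H12 | H21].
    + exists C2; split; [easy |]; apply (HS C2 HC2); auto.
    + exists C1; split; [easy |]; apply (HS C1 HC1); auto.
  - intros E F [C [HC HE]] HF Hsub.
    exists C; split; [easy |]; now apply (HS C HC) with E.
Qed.

Lemma chain_union_in_star S :
  (exists C, S C) -> (forall C, S C -> in_star v C) -> is_chain S ->
  in_star v (chain_union S).
Proof.
  intros Hne HS Hchain; split.
  - apply chain_union_is_filter; [| apply HS |]; auto.
  - intros F HDF HnF [E [[C [HC HE]] Hcov]].
    apply (proj2 (HS C HC) F HDF); [| now exists E].
    intros G HG HCG; apply (HnF G HG); now exists C.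
Qed.

Lemma chain_bounded_in_star S :
  (forall C, S C -> in_star v C) -> is_chain S ->
  exists U, in_star v U /\ forall C, S C -> fam_incl C U.
Proof.
  intros HS Hchain.
  destruct (classic (exists C, S C)) as [Hne | Hempty].
  - exists (chain_union S); split; [now apply chain_union_in_star |].
    intros C HC E HE; now exists C.
  - exists (point_filter (idm v)); split; [apply point_filter_in_star, rng_idm |].
    intros C HC; destruct Hempty; eauto.
Qed.

Lemma filter_extends_to_maximal C :
  is_filter v C -> exists M, maximal_filter v M /\ fam_incl C M.
Proof.
  intros HC.
  set (T := { M | is_filter v M /\ fam_incl C M }).
  set (R := fun s t : T => boolp.asbool (fam_incl (proj1_sig s) (proj1_sig t))).
  assert (HR : forall s t : T, R s t = true <-> fam_incl (proj1_sig s) (proj1_sig t)).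
  { intros s t; split; [apply (ssrbool.elimT (boolp.asboolP _)) |
                        apply (ssrbool.introT (boolp.asboolP _))]. }
  assert (t0 : T) by (exists C; split; [easy | now intros E]).
  destruct (classical_sets.ZL_preorder t0 (R := R)) as [t Ht].
  - intros s; apply HR; now intros E.
  - intros r s t Hrs Hst; apply HR; apply HR in Hrs, Hst; intros E HE; auto.
  - intros A HA.
    (* [C] itself is added so that an empty chain also has a filter as upper bound. *)
    set (S := fun M => M = C \/ exists s, A s /\ proj1_sig s = M).
    assert (HS : is_filter v (chain_union S) /\ fam_incl C (chain_union S)).
    { split; [apply chain_union_is_filter |].
      - exists C; now left.
      - intros M [-> | [s [_ <-]]]; [easy | apply (proj2_sig s)].
      - intros M1 M2 [-> | [s1 [HA1 <-]]] [-> | [s2 [HA2 <-]]].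
        + left; now intros E.
        + left; apply (proj2_sig s2).
        + right; apply (proj2_sig s1).
        + destruct (HA s1 s2 HA1 HA2); [left | right]; now apply HR.
      - intros E HE; exists C; split; [now left | easy]. }
    exists (exist _ (chain_union S) HS : T); intros s Hs; apply HR; simpl.
    intros E HE; exists (proj1_sig s); split; [right; eauto | easy].
  - destruct (proj2_sig t) as [Hfilter Hincl].
    exists (proj1_sig t); split; [split; [easy |] | easy].
    intros N HN HtN.
    assert (HN' : is_filter v N /\ fam_incl C N)
      by (split; [easy | intros E HE; apply HtN, Hincl, HE]).
    set (tN := exist _ N HN' : T).
    apply (HR tN t), (Ht tN), (HR t tN), HtN.
Qed.

Lemma maximal_in_star_maximal_filter C : maximal_in_star v C -> maximal_filter v C.
Proof.
  intros [HC Hmax]; split; [apply HC |].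
  intros C' HC' HCC'.
  destruct (filter_extends_to_maximal C' HC') as [M [HM HC'M]].
  intros E HE; apply (Hmax M (maximal_filter_in_star M HM)); auto.
  intros E' HE'; auto.
Qed.

End Filters.

Theorem mainTheorem10 (L : Cat) (HL : left_cancellative L) (v : Obj L) :
  (forall C, maximal_filter v C -> in_star v C) /\
  (forall S : ((Mor L -> Prop) -> Prop) -> Prop,
     (forall C, S C -> in_star v C) ->
     (forall C1 C2, S C1 -> S C2 -> fam_incl C1 C2 \/ fam_incl C2 C1) ->
     exists U, in_star v U /\ forall C, S C -> fam_incl C U) /\
  (forall C, maximal_in_star v C -> maximal_filter v C).
Proof.
  split; [| split].
  - exact (maximal_filter_in_star L HL v).
  - exact (chain_bounded_in_star L HL v).
  - exact (maximal_in_star_maximal_filter L HL v).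
Qed.
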